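(* For all $j,k\ge1$ and at every point of $\mathcal H$, the vector fields of the central system satisfy the exactness condition $$\frac{\partial H^{(j)}}{\partial t_k}=\frac{\partial H^{(k)}}{\partial t_j},$$ i.e. the $H^{(j)}$-component of $X_k$ equals the $H^{(k)}$-component of $X_j$.
   Context: Let $z$ be a formal variable and $\mathcal L$ the space of formal Laurent series $\sum_{j\le N} l_j z^j$ (finitely many positive powers of $z$). Let $\mathcal H$ be the set of sequences $H=(H^{(k)})_{k\ge0}$ of elements of $\mathcal L$ with $H^{(0)}=1$ and, for $k\ge1$, $H^{(k)}=z^k+\sum_{l\ge1}H^k_l z^{-l}$; the coefficients $H^k_l$ are coordinates on $\mathcal H$, and we set $H^0_l=0$. The central system (CS) is the family of vector fields $X_j$, $j\ge1$, on $\mathcal H$, with associated times $t_j$, defined by $$\frac{\partial H^{(k)}}{\partial t_j}=H^{(j+k)}-H^{(j)}H^{(k)}+\sum_{l=1}^{k}H^j_lH^{(k-l)}+\sum_{l=1}^{j}H^k_lH^{(j-l)},\qquad k\ge0;$$ the right-hand side contains only negative powers of $z$, so this determines the components $X_j(H^k_l)$. *)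

From HB Require Import structures.
From mathcomp Require Import all_boot all_order all_algebra.
Set Implicit Arguments. Unset Strict Implicit. Unset Printing Implicit Defensive.
Import Order.TTheory GRing.Theory Num.Theory.
Local Open Scope ring_scope.

Section CentralSystem.
Variable R : comNzRingType.

(* A formal Laurent series sum_{n <= N} l_n z^n, represented by a bound N
   (on the positive powers) and its coefficient function n |-> l_n
   (coefficients above N are ignored / assumed zero). *)
Definition lseries := (nat * (int -> R))%type.

Definition lcoef (s : lseries) (n : int) : R :=
  if (n <= (s.1)%:Z) then s.2 n else 0.

Definition ladd (s t : lseries) : lseries :=
  (maxn s.1 t.1, fun n => lcoef s n + lcoef t n).

Definition lopp (s : lseries) : lseries := (s.1, fun n => - lcoef s n).

Definition lscale (a : R) (s : lseries) : lseries := (s.1, fun n => a * lcoef s n).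

Definition lzero : lseries := (0%N, fun _ => 0).

(* Cauchy product: the coefficient of z^n is the finite sum
   sum_{a + b = n, a <= N1, b <= N2} s_a t_b. *)
Definition lmul (s t : lseries) : lseries :=
  ((s.1 + t.1)%N, fun n =>
     \sum_(0 <= i < `|((s.1 + t.1)%N)%:Z - n|%N.+1 | n <= ((s.1 + t.1)%N)%:Z)
        lcoef s ((s.1)%:Z - i%:Z) * lcoef t (n - (s.1)%:Z + i%:Z)).

Definition lsum (s : seq lseries) : lseries := foldr ladd lzero s.

(* A point of the space H is given by its coordinates H^k_l (k, l >= 1);
   values c k l with k = 0 or l = 0 are irrelevant. *)
Definition point := nat -> nat -> R.

Definition Hc (c : point) (k l : nat) : R := if k == 0%N then 0 else c k l.

(* The Laurent series H^(k): H^(0) = 1, H^(k) = z^k + sum_{l>=1} H^k_l z^-l. *)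
Definition Hser (c : point) (k : nat) : lseries :=
  (k, fun n => if n == k%:Z then 1
               else if n < 0 then Hc c k `|n|%N else 0).

(* Right-hand side of dH^(k)/dt_j. *)
Definition CS_rhs (c : point) (j k : nat) : lseries :=
  lsum [:: Hser c (j + k);
           lopp (lmul (Hser c j) (Hser c k));
           lsum [seq lscale (Hc c j l) (Hser c (k - l)) | l <- iota 1 k];
           lsum [seq lscale (Hc c k l) (Hser c (j - l)) | l <- iota 1 j]].

(* The component X_j(H^k_l): coefficient of z^-l in dH^(k)/dt_j. *)
Definition X (c : point) (j k l : nat) : R := lcoef (CS_rhs c j k) (- (l%:Z)).

End CentralSystem.

From mathcomp Require Import all_boot all_order all_algebra.
From mathcomp Require Import zify ring.
Import Order.TTheory GRing.Theory Num.Theory.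
Local Open Scope ring_scope.

(* Apart from [H^(j) H^(k)], whose coefficients are symmetric because the
   coefficient ring is commutative, the right-hand side of the central system
   is visibly symmetric in j and k: [H^(j+k)] and the two sums are exchanged.
   Hence every coefficient of [dH^(k)/dt_j] equals the corresponding one of
   [dH^(j)/dt_k]. *)

Section LaurentCoefficients.
Variable R : comNzRingType.
Implicit Types s t : lseries R.

Lemma lcoef_above_bound s n : s.1%:Z < n -> lcoef s n = 0.
Proof. by move=> lt_s_n; rewrite /lcoef ifN // -ltNge. Qed.

Lemma lcoef_ladd s t n : lcoef (ladd s t) n = lcoef s n + lcoef t n.
Proof.
rewrite {1}/lcoef /=; case: ifPn => // /negP n_gt_max.
by rewrite !lcoef_above_bound ?addr0 //; lia.
Qed.

Lemma lcoef_lopp s n : lcoef (lopp s) n = - lcoef s n.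
Proof.
rewrite {1}/lcoef /=; case: ifPn => // /negP n_gt_bound.
by rewrite lcoef_above_bound ?oppr0 //; lia.
Qed.

Lemma lmul_coefC s t n : (lmul s t).2 n = (lmul t s).2 n.
Proof.
rewrite /lmul /= (addnC t.1); set N := (s.1 + t.1)%N.
have [le_n_N|_] := boolP (n <= N%:Z); last by rewrite !big_pred0.
have dist_nN : (`|N%:Z - n|%N)%:Z = N%:Z - n by rewrite gez0_abs // subr_ge0.
rewrite big_nat_rev /=; apply: eq_big_nat => i /andP [_ le_i].
rewrite add0n subSS mulrC -subzn // dist_nN /N PoszD.
by congr (lcoef _ _ * lcoef _ _); ring.
Qed.

Lemma lcoef_lmulC s t n : lcoef (lmul s t) n = lcoef (lmul t s) n.
Proof. by rewrite /lcoef lmul_coefC /= addnC. Qed.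

End LaurentCoefficients.

Lemma lcoef_CS_rhsC (R : comNzRingType) (c : point R) j k n :
  lcoef (CS_rhs c j k) n = lcoef (CS_rhs c k j) n.
Proof.
rewrite /CS_rhs /lsum /= !lcoef_ladd !lcoef_lopp lcoef_lmulC addnC.
by congr (_ + (_ + _)); rewrite addrCA.
Qed.

Theorem mainTheorem3 (R : comNzRingType) (c : point R) (j k : nat) :
  (1 <= j)%N -> (1 <= k)%N ->
  forall l : nat, (1 <= l)%N -> X c k j l = X c j k l.
Proof. by move=> _ _ l _; rewrite /X lcoef_CS_rhsC. Qed.
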